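(* For every finite simple graph $G$ with at least one edge, there exists a non-isolated vertex $v$ of $G$ such that $\alpha(G)=\alpha(G-v)\ge \alpha(G-N[v])+1$.
   Context: $\alpha(H)$ denotes the independence number of a graph $H$ (maximum size of an independent set). For $S\subseteq V(G)$, $G-S$ is the graph obtained by deleting the vertices of $S$ and their incident edges; $G-v=G-\{v\}$; $N[v]$ is the closed neighbourhood of $v$ (i.e. $v$ together with its neighbours). *)

From mathcomp Require Import all_boot.
Set Implicit Arguments. Unset Strict Implicit. Unset Printing Implicit Defensive.

Definition simple_graph (T : finType) (e : rel T) : Prop :=
  symmetric e /\ irreflexive e.

Definition independent (T : finType) (e : rel T) (I : {set T}) : bool :=
  [forall x in I, forall y in I, ~~ e x y].

Definition alpha_on (T : finType) (e : rel T) (S : {set T}) : nat :=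
  \max_(I : {set T} | (I \subset S) && independent e I) #|I|.

Definition alpha (T : finType) (e : rel T) : nat := alpha_on e [set: T].

Definition closed_nbhd (T : finType) (e : rel T) (v : T) : {set T} :=
  v |: [set u | e v u].

Definition alpha_del (T : finType) (e : rel T) (S : {set T}) : nat :=
  alpha_on e (~: S).

From mathcomp Require Import all_boot.

Set Implicit Arguments.
Unset Strict Implicit.
Unset Printing Implicit Defensive.

(* A maximum independent set contains at most one endpoint of an edge, so some
   endpoint v of an edge lies outside it, and deleting v does not lower the
   independence number.  For any vertex v, adding v to an independent set of
   G - N[v] gives an independent set of G, so alpha(G - N[v]) < alpha(G). *)

Section IndependenceNumber.

Variables (T : finType) (e : rel T).

Lemma independentP (I : {set T}) :
  reflect {in I &, forall x y, ~~ e x y} (independent e I).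
Proof.
apply: (iffP forallP) => [iI x y xI yI | iI x].
  by move: (iI x) => /implyP/(_ xI)/forallP/(_ y)/implyP/(_ yI).
by apply/implyP => xI; apply/forallP => y; apply/implyP => yI; apply: iI.
Qed.

Lemma independent0 : independent e set0.
Proof. by apply/independentP => x y; rewrite inE. Qed.

Lemma independentU1 (v : T) (J : {set T}) :
  symmetric e -> irreflexive e -> {in J, forall u, ~~ e v u} ->
  independent e J -> independent e (v |: J).
Proof.
move=> esym eirr nvJ /independentP iJ; apply/independentP => a b.
rewrite !inE => /predU1P[-> | aJ] /predU1P[-> | bJ].
- by rewrite eirr.
- exact: nvJ.
- by rewrite esym nvJ.
- exact: iJ.
Qed.

Lemma independent_edge (I : {set T}) (x y : T) :
  independent e I -> e x y -> (x \notin I) || (y \notin I).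
Proof.
move=> /independentP iI exy; rewrite -negb_and.
by apply: contraL exy => /andP[xI yI]; apply: iI.
Qed.

Lemma alpha_on_ge (S I : {set T}) :
  I \subset S -> independent e I -> #|I| <= alpha_on e S.
Proof.
move=> sIS iI; apply: (@leq_bigmax_cond _ _ (fun J : {set T} => #|J|) I).
by rewrite sIS iI.
Qed.

Lemma alpha_on_subset (S S' : {set T}) :
  S \subset S' -> alpha_on e S <= alpha_on e S'.
Proof.
move=> sSS'; apply/bigmax_leqP => I /andP[sIS iI].
exact: alpha_on_ge (subset_trans sIS sSS') iI.
Qed.

Lemma alpha_on_attained (S : {set T}) :
  exists I : {set T}, [/\ I \subset S, independent e I & #|I| = alpha_on e S].
Proof.
have P0 : 0 < #|[pred I : {set T} | (I \subset S) && independent e I]|.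
  by apply/card_gt0P; exists set0; rewrite inE sub0set independent0.
have [I] := eq_bigmax_cond (fun J : {set T} => #|J|) P0.
by rewrite inE => /andP[sIS iI] cardI; exists I.
Qed.

Lemma alpha_del_eq (S I : {set T}) :
  independent e I -> #|I| = alpha e -> [disjoint I & S] ->
  alpha_del e S = alpha e.
Proof.
move=> iI cardI dIS; apply/eqP; rewrite eqn_leq alpha_on_subset ?subsetT //=.
by rewrite -cardI alpha_on_ge // -disjoints_subset.
Qed.

Lemma alpha_del_closed_nbhd_lt (v : T) :
  symmetric e -> irreflexive e -> alpha_del e (closed_nbhd e v) < alpha e.
Proof.
move=> esym eirr; rewrite /alpha_del.
have [J [sJ iJ <-]] := alpha_on_attained (~: closed_nbhd e v).
have vJ : v \notin J by apply/negP => /(subsetP sJ); rewrite !inE eqxx.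
have nvJ : {in J, forall u, ~~ e v u}.
  by move=> u /(subsetP sJ); rewrite !inE negb_or => /andP[].
have := cardsU1 v J; rewrite vJ add1n => <-.
exact: alpha_on_ge (subsetT _) (independentU1 esym eirr nvJ iJ).
Qed.

End IndependenceNumber.

Theorem lemma1 (T : finType) (e : rel T) :
  simple_graph e ->
  (exists x y : T, e x y) ->
  exists v : T,
    (exists u : T, e v u) /\
    alpha e = alpha_del e [set v] /\
    alpha_del e [set v] >= (alpha_del e (closed_nbhd e v)).+1.
Proof.
move=> [esym eirr] [x [y exy]].
have [I [_ iI cardI]] := alpha_on_attained e [set: T].
have [v [[u evu] vI]] : exists v, (exists u, e v u) /\ v \notin I.
  case/orP: (independent_edge iI exy) => [xI | yI].
    by exists x; split; [exists y |].
  by exists y; split; [exists x; rewrite esym |].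
have del_v : alpha e = alpha_del e [set v].
  by rewrite (alpha_del_eq iI cardI) // disjoint_sym disjoints1.
exists v; split; first by exists u.
by split; rewrite -del_v //; apply: alpha_del_closed_nbhd_lt.
Qed.
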